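(* Let $D$ be a division semialgebra over $\mathbb{Z}_\mathrm{max}$ with finite unit index. Then $D$ is selective: for all $x,y\in D$, either $x+y=x$ or $x+y=y$.
   Context: A (possibly noncommutative) semiring has a commutative associative addition with identity $0$ and an associative multiplication with identity $1$, satisfying both distributive laws; a division semiring is one in which every nonzero element is invertible. $\mathbb{Z}_\mathrm{max}=\mathbb{Z}\cup\{-\infty\}$ is the semifield with addition $\max$ and multiplication ordinary addition. A division semialgebra over a semifield $K$ is a division semiring $D$ with an injective homomorphism from $K$ into the center of $D$. The unit index is $\mathrm{ui}(D/K)=|D^\times/K^\times|$. *)

(* NOTE: no absorbing-zero axiom is
   assumed, since the paper's definition does not list it. *)
From Stdlib Require Import ZArith List Lia.
Open Scope Z_scope.

Record Semiring := {
  car :> Type;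
  sadd : car -> car -> car;
  smul : car -> car -> car;
  szero : car;
  sone : car;
  sadd_assoc : forall x y z, sadd x (sadd y z) = sadd (sadd x y) z;
  sadd_comm : forall x y, sadd x y = sadd y x;
  sadd_0l : forall x, sadd szero x = x;
  smul_assoc : forall x y z, smul x (smul y z) = smul (smul x y) z;
  smul_1l : forall x, smul sone x = x;
  smul_1r : forall x, smul x sone = x;
  smul_addl : forall x y z, smul (sadd x y) z = sadd (smul x z) (smul y z);
  smul_addr : forall x y z, smul x (sadd y z) = sadd (smul x y) (smul x z)
}.

Arguments sadd {s}. Arguments smul {s}. Arguments szero {s}. Arguments sone {s}.

Definition is_unit {D : Semiring} (x : D) : Prop :=
  exists y : D, smul x y = sone /\ smul y x = sone.

Definition division_semiring (D : Semiring) : Prop :=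
  forall x : D, x <> szero -> is_unit x.

(* The semifield Z_max = Z ∪ {-oo} with addition max and multiplication +;
   None represents -oo. *)
Definition zmax := option Z.
Definition zmax_add (a b : zmax) : zmax :=
  match a, b with
  | None, y => y
  | x, None => x
  | Some x, Some y => Some (Z.max x y)
  end.
Definition zmax_mul (a b : zmax) : zmax :=
  match a, b with
  | Some x, Some y => Some (x + y)
  | _, _ => None
  end.

Definition Zmax : Semiring.
Proof.
  refine {| car := zmax; sadd := zmax_add; smul := zmax_mul;
            szero := None; sone := Some 0 |};
  repeat (let x := fresh in intro x; destruct x as [x|]); simpl;
  try reflexivity; f_equal; lia.
Defined.

Definition is_semiring_hom {K D : Semiring} (f : K -> D) : Prop :=
  f szero = szero /\ f sone = sone /\
  (forall a b, f (sadd a b) = sadd (f a) (f b)) /\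
  (forall a b, f (smul a b) = smul (f a) (f b)).

Definition division_semialgebra (K D : Semiring) (f : K -> D) : Prop :=
  division_semiring D /\ is_semiring_hom f /\
  (forall a b, f a = f b -> a = b) /\
  (forall (a : K) (x : D), smul (f a) x = smul x (f a)).

(* Finite unit index: D^x / f(K^x) is finite, i.e. there are finitely many
   units v_1..v_m such that every unit of D lies in some coset v_i f(K^x). *)
Definition finite_unit_index (K D : Semiring) (f : K -> D) : Prop :=
  exists s : list D,
    (forall v, In v s -> is_unit v) /\
    forall u : D, is_unit u ->
      exists v, In v s /\ exists k : K, is_unit k /\ u = smul v (f k).

Definition selective (D : Semiring) : Prop :=
  forall x y : D, sadd x y = x \/ sadd x y = y.

(* In D, [1 + 1 = f (1 + 1) = 1], so addition is idempotent, and it suffices to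
   show that [1] is comparable with every unit [u] (then [x + y = x (1 + x^-1 y)]).
   Finite unit index and the pigeonhole principle give two powers [u^i], [u^j]
   (i < j) in the same coset, so [u^(j-i)] lies in the image of Z_max, which is
   selective; and comparability of [1] with a positive power [u^(n+1)] descends
   to [u] by multiplying [1 + u] with the geometric sum [1 + u + ... + u^n]
   and cancelling that (nonzero, hence invertible) sum. *)
From Stdlib Require Import ZArith List Lia Classical.

Definition comparable {D : Semiring} (x y : D) : Prop :=
  sadd x y = x \/ sadd x y = y.

Lemma comparable_map (K D : Semiring) (f : K -> D) (a b : K) :
  (forall a b, f (sadd a b) = sadd (f a) (f b)) ->
  comparable a b -> comparable (f a) (f b).
Proof.
  intros fadd [E|E]; [left|right]; rewrite <- fadd, E; reflexivity.
Qed.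

Lemma selective_Zmax : selective Zmax.
Proof.
  intros [a|] [b|]; simpl; auto.
  destruct (Z.max_spec a b) as [[_ ->]|[_ ->]]; auto.
Qed.

Lemma infinite_pigeonhole (A : Type) (s : list A) (R : nat -> A -> Prop) :
  (forall j, exists a, In a s /\ R j a) ->
  exists i j a, (i < j)%nat /\ In a s /\ R i a /\ R j a.
Proof.
  revert R; induction s as [|a s IH]; intros R HR.
  - destruct (HR O) as (? & [] & _).
  - destruct (classic (exists j0, R j0 a)) as [[j0 Hj0]|Hnone].
    + destruct (classic (exists j, (j0 < j)%nat /\ R j a)) as [[j [Hlt Hj]]|Hlate].
      { exists j0, j, a; repeat split; simpl; auto. }
      destruct (IH (fun j => R (S (j0 + j)))) as (i & j & b & Hij & Hb & Hi & Hj).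
      { intro j. destruct (HR (S (j0 + j))) as (b & [<-|Hb] & Hjb); eauto.
        exfalso; apply Hlate; exists (S (j0 + j)); split; [lia|exact Hjb]. }
      exists (S (j0 + i)), (S (j0 + j)), b; repeat split; simpl; auto; lia.
    + destruct (IH R) as (i & j & b & Hij & Hb & Hi & Hj).
      { intro j. destruct (HR j) as (b & [<-|Hb] & Hjb); eauto.
        exfalso; eauto. }
      exists i, j, b; repeat split; simpl; auto.
Qed.

Section Semiring.
Variable D : Semiring.

Fixpoint spow (u : D) (n : nat) : D :=
  match n with O => sone | S n => smul u (spow u n) end.

Lemma spow_add (u : D) m n : spow u (m + n) = smul (spow u m) (spow u n).
Proof.
  induction m as [|m IH]; simpl.
  - now rewrite smul_1l.
  - now rewrite IH, smul_assoc.
Qed.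

Lemma spow_succ_r (u : D) n : spow u (S n) = smul (spow u n) u.
Proof.
  replace (S n) with (n + 1)%nat by lia.
  now rewrite spow_add; simpl; rewrite smul_1r.
Qed.

Lemma is_unit_mul (a b : D) : is_unit a -> is_unit b -> is_unit (smul a b).
Proof.
  intros [a' [Ha1 Ha2]] [b' [Hb1 Hb2]]. exists (smul b' a'). split.
  - now rewrite <- smul_assoc, (smul_assoc _ b b' a'), Hb1, smul_1l.
  - now rewrite <- smul_assoc, (smul_assoc _ a' a b), Ha2, smul_1l.
Qed.

Lemma is_unit_spow (u : D) n : is_unit u -> is_unit (spow u n).
Proof.
  intros Hu; induction n as [|n IH]; simpl.
  - exists sone; split; apply smul_1l.
  - now apply is_unit_mul.
Qed.

Lemma unit_cancel_l (s a b : D) : is_unit s -> smul s a = smul s b -> a = b.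
Proof.
  intros [t [_ Hts]] E.
  now rewrite <- (smul_1l D a), <- (smul_1l D b), <- Hts, <- !smul_assoc, E.
Qed.

Lemma comparable_mull (z x y : D) :
  comparable x y -> comparable (smul z x) (smul z y).
Proof.
  intros [E|E]; [left|right]; now rewrite <- smul_addr, E.
Qed.

Lemma selective_of_comparable_one_units :
  division_semiring D -> (forall w : D, is_unit w -> comparable sone w) ->
  selective D.
Proof.
  intros Hdiv Hone x y.
  destruct (classic (y = szero)) as [->|Hy].
  { left; rewrite sadd_comm; apply sadd_0l. }
  destruct (classic (x = szero)) as [->|Hx].
  { right; apply sadd_0l. }
  destruct (Hdiv x Hx) as [x' [Hxx' Hx'x]].
  assert (Ey : smul x (smul x' y) = y) by now rewrite smul_assoc, Hxx', smul_1l.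
  assert (Hw : is_unit (smul x' y)).
  { apply is_unit_mul; [exists x; auto | exact (Hdiv y Hy)]. }
  pose proof (comparable_mull x _ _ (Hone _ Hw)) as Hc.
  now rewrite smul_1r, Ey in Hc.
Qed.

Section Idempotent.
Hypothesis sadd_1_1 : sadd (sone : D) sone = sone.

Lemma sadd_idem (x : D) : sadd x x = x.
Proof. now rewrite <- (smul_1r D x), <- smul_addr, sadd_1_1. Qed.

Fixpoint geom (u : D) (n : nat) : D :=
  match n with O => sone | S n => sadd (geom u n) (spow u (S n)) end.

Lemma geom_mulr_add1 (u : D) n :
  sadd (smul (geom u n) u) sone = geom u (S n).
Proof.
  induction n as [|n IH]; cbn [geom].
  - simpl; now rewrite smul_1l, smul_1r, sadd_comm.
  - cbn [geom] in IH. rewrite smul_addl, <- (spow_succ_r u (S n)), <- IH.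
    rewrite <- !sadd_assoc. f_equal. apply sadd_comm.
Qed.

Lemma geom_add1 (u : D) n : sadd (geom u n) sone = geom u n.
Proof.
  induction n as [|n IH]; cbn [geom].
  - exact sadd_1_1.
  - now rewrite <- sadd_assoc, (sadd_comm _ (spow u (S n))), sadd_assoc, IH.
Qed.

Lemma geom_mulr_add_spow (u : D) n :
  sadd (smul (geom u n) u) (spow u (S n)) = smul (geom u n) u.
Proof.
  induction n as [|n IH]; cbn [geom].
  - simpl; now rewrite smul_1l, smul_1r, sadd_idem.
  - now rewrite smul_addl, <- (spow_succ_r u (S n)), <- sadd_assoc, sadd_idem.
Qed.

Lemma comparable_one_of_spow (u : D) n :
  division_semiring D -> sone <> szero :> D ->
  comparable sone (spow u (S n)) -> comparable sone u.
Proof.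
  intros Hdiv one_ne0 Hp.
  set (s := geom u n). set (p := spow u (S n)) in Hp.
  assert (Es : sadd (smul s u) sone = sadd s p) by apply geom_mulr_add1.
  assert (Hs1 : sadd s sone = s) by apply geom_add1.
  assert (Hsu : sadd (smul s u) p = smul s u) by apply geom_mulr_add_spow.
  assert (Hs : is_unit s).
  { apply Hdiv. intros E. apply one_ne0.
    now rewrite E, sadd_0l in Hs1. }
  destruct Hp as [Ep|Ep]; [left|right]; apply (unit_cancel_l s _ _ Hs);
    rewrite smul_addr, !smul_1r.
  - assert (Esp : sadd s p = s).
    { rewrite <- Hs1 at 1. now rewrite <- sadd_assoc, Ep. }
    rewrite Esp in Es. rewrite <- Es at 1.
    now rewrite <- sadd_assoc, (sadd_comm D sone), sadd_assoc, sadd_idem.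
  - assert (Esu : smul s u = sadd s p).
    { transitivity (sadd (smul s u) (sadd sone p)); [now rewrite Ep|].
      now rewrite sadd_assoc, Es, <- sadd_assoc, sadd_idem. }
    now rewrite Esu, sadd_assoc, sadd_idem.
Qed.

End Idempotent.
End Semiring.

Arguments spow {D}.

Lemma spow_in_image_of_finite_unit_index (K D : Semiring) (f : K -> D) :
  f sone = sone -> (forall a b, f (smul a b) = smul (f a) (f b)) ->
  finite_unit_index K D f ->
  forall u : D, is_unit u -> exists n k, spow u (S n) = f k.
Proof.
  intros f1 fmul [s [Hs Hcov]] u Hu.
  destruct (infinite_pigeonhole D s
              (fun j v => exists k, is_unit k /\ spow u j = smul v (f k)))
    as (i & j & v & Hij & Hv & [a [[a' [_ Ha'a]] Ei]] & [b [_ Ej]]).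
  { intro j. destruct (Hcov _ (is_unit_spow D u j Hu)) as (v & Hv & Hk). eauto. }
  exists (j - i - 1)%nat, (smul a' b).
  replace j with (i + S (j - i - 1))%nat in Ej by lia.
  rewrite spow_add, Ei, <- smul_assoc in Ej.
  apply (unit_cancel_l D v) in Ej; [|exact (Hs v Hv)].
  now rewrite fmul, <- Ej, smul_assoc, <- fmul, Ha'a, f1, smul_1l.
Qed.

Theorem mainTheorem15 (D : Semiring) (f : Zmax -> D) :
  division_semialgebra Zmax D f ->
  finite_unit_index Zmax D f ->
  selective D.
Proof.
  intros [Hdiv [[f0 [f1 [fadd fmul]]] [finj _]]] Hfin.
  assert (sadd_1_1 : sadd (sone : D) sone = sone)
    by (rewrite <- f1, <- fadd; reflexivity).
  assert (one_ne0 : (sone : D) <> szero).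
  { rewrite <- f1, <- f0. intros E. discriminate (finj _ _ E). }
  apply selective_of_comparable_one_units; [exact Hdiv|].
  intros u Hu.
  destruct (spow_in_image_of_finite_unit_index _ _ f f1 fmul Hfin u Hu)
    as [n [k Ek]].
  apply (comparable_one_of_spow D sadd_1_1 u n Hdiv one_ne0).
  rewrite Ek, <- f1.
  apply comparable_map; [exact fadd | apply selective_Zmax].
Qed.
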